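(* Let $(V_1,V_2)$ be a pair of commuting isometries on a Hilbert space with $\operatorname{ran}V_1=\operatorname{ran}V_2$. If $V_1V_2$ is pure, then both $V_1$ and $V_2$ are pure.
   Context: An isometry $T$ is pure if $T^{*n}\to0$ strongly as $n\to\infty$ (equivalently, $T$ is a unilateral shift of some multiplicity). *)

From mathcomp Require Import all_boot all_algebra complex reals.
Set Implicit Arguments. Unset Strict Implicit. Unset Printing Implicit Defensive.
Import GRing.Theory Num.Theory.
Local Open Scope ring_scope.

Section Hilbert.
Variables (R : realType) (H : lmodType R[i]) (ip : H -> H -> R[i]).

Definition is_inner_product : Prop :=
  [/\ forall (a : R[i]) (x y z : H), ip (a *: x + y) z = a * ip x z + ip y z,
      forall x y : H, ip y x = (ip x y)^*,
      forall x : H, 0 <= ip x x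
    & forall x : H, ip x x = 0 -> x = 0].

Definition hnorm (x : H) : R := Num.sqrt (complex.Re (ip x x)).

Definition hilbert_complete : Prop :=
  forall u : nat -> H,
    (forall e : R, 0 < e -> exists N : nat, forall m n : nat,
        (N <= m)%N -> (N <= n)%N -> hnorm (u m - u n) < e) ->
    exists l : H, forall e : R, 0 < e -> exists N : nat, forall n : nat,
        (N <= n)%N -> hnorm (u n - l) < e.

Definition is_hilbert : Prop := is_inner_product /\ hilbert_complete.

Definition is_linear_op (T : H -> H) : Prop :=
  forall (a : R[i]) (x y : H), T (a *: x + y) = a *: T x + T y.

Definition is_isometry (V : H -> H) : Prop :=
  is_linear_op V /\ forall x : H, hnorm (V x) = hnorm x.

Definition is_adjoint (T A : H -> H) : Prop :=
  forall x y : H, ip (T x) y = ip x (A y).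

Definition is_pure (T : H -> H) : Prop :=
  exists A : H -> H, is_adjoint T A /\
    forall x : H, forall e : R, 0 < e -> exists N : nat, forall n : nat,
      (N <= n)%N -> hnorm (iter n A x) < e.

Definition op_range (T : H -> H) (y : H) : Prop := exists x : H, y = T x.

End Hilbert.

(* Let B be the adjoint of V1 V2 given by purity. Because each V_j is an
   isometry commuting with the other, A1 := B V2 and A2 := B V1 are the
   adjoints of V1 and V2, and B = A1 A2 = A2 A1. Equal ranges give equal
   range projections V1 A1 = V2 A2, hence ||A2 y|| = ||A1 y|| for all y.
   Commuting A1 past A2 then yields ||B^n x|| = ||A1^(2n) x||, so the
   iterates of A1 (and symmetrically of A2) tend to 0 strongly. *)

From mathcomp Require Import all_boot all_algebra complex reals ring.
Set Implicit Arguments.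
Unset Strict Implicit.
Unset Printing Implicit Defensive.
Import GRing.Theory Num.Theory.
Local Open Scope ring_scope.

Section InnerProduct.
Variables (R : realType) (H : lmodType R[i]) (ip : H -> H -> R[i]).
Hypothesis hip : is_inner_product ip.

Lemma ipDl (x y z : H) : ip (x + y) z = ip x z + ip y z.
Proof. by case: hip => ipZDl _ _ _; rewrite -[x in LHS]scale1r ipZDl mul1r. Qed.

Lemma ip0l (z : H) : ip 0 z = 0.
Proof. by apply: (addrI (ip 0 z)); rewrite -ipDl !addr0. Qed.

Lemma ipZl (a : R[i]) (x z : H) : ip (a *: x) z = a * ip x z.
Proof.
by case: hip => ipZDl _ _ _; rewrite -[_ *: _]addr0 ipZDl ip0l addr0.
Qed.

Lemma ipDr (x y z : H) : ip z (x + y) = ip z x + ip z y.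
Proof. by case: hip => _ ipC _ _; rewrite ipC (ipC x) (ipC y) ipDl rmorphD. Qed.

Lemma ipZr (a : R[i]) (x z : H) : ip z (a *: x) = a^* * ip z x.
Proof. by case: hip => _ ipC _ _; rewrite ipC (ipC x) ipZl rmorphM. Qed.

Lemma ipNr (x z : H) : ip z (- x) = - ip z x.
Proof. by rewrite -scaleN1r ipZr rmorphN rmorph1 mulN1r. Qed.

Lemma ipr_inj (a b : H) : (forall x, ip x a = ip x b) -> a = b.
Proof.
move=> eq_ab; apply/eqP; rewrite -subr_eq0; apply/eqP.
by case: hip => _ _ _ ip_eq0; apply: ip_eq0; rewrite ipDr ipNr eq_ab subrr.
Qed.

Lemma ipxx_real (x : H) : ip x x = (complex.Re (ip x x))%:C%C.
Proof.
case: hip => _ _ ip_ge0 _.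
by rewrite [LHS](complexE (ip x x)) ger0_Im ?ip_ge0 // mulr0 addr0.
Qed.

Lemma ipDD (x y : H) :
  ip (x + y) (x + y) = ip x x + (ip x y + ip y x) + ip y y.
Proof. by rewrite !(ipDl, ipDr); ring. Qed.

(* Polarization: [ip x y] is recovered from symmetrised products, which
   [ipDD] expresses through [ip z z]. *)
Lemma ip_polarization (x y : H) :
  2 * ip x y = (ip x y + ip y x) + 'i * (ip x ('i *: y) + ip ('i *: y) x).
Proof.
rewrite ipZr ipZl conjCi.
have i2 : 'i * 'i = -1 :> R[i] by rewrite -expr2 sqrCi.
transitivity (ip x y + ip y x - ('i * 'i) * ip x y + ('i * 'i) * ip y x).
  by rewrite i2; ring.
ring.
Qed.

End InnerProduct.

Section LinearOperator.
Variables (R : realType) (H : lmodType R[i]) (T : H -> H).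
Hypothesis linT : is_linear_op T.

Lemma linear_opD (x y : H) : T (x + y) = T x + T y.
Proof. by rewrite -[x in LHS]scale1r linT scale1r. Qed.

Lemma linear_op0 : T 0 = 0.
Proof. by apply: (addrI (T 0)); rewrite -linear_opD !addr0. Qed.

Lemma linear_opZ (a : R[i]) (x : H) : T (a *: x) = a *: T x.
Proof. by rewrite -[_ *: _]addr0 linT linear_op0 addr0. Qed.

End LinearOperator.

Section Isometry.
Variables (R : realType) (H : lmodType R[i]) (ip : H -> H -> R[i]).
Hypothesis hip : is_inner_product ip.
Variable V : H -> H.
Hypothesis isoV : is_isometry ip V.

Lemma isometry_ipxx (x : H) : ip (V x) (V x) = ip x x.
Proof.
have Re_ge0 y : 0 <= complex.Re (ip y y).
  by case: hip => _ _ /(_ y); rewrite lecE => /andP[].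
rewrite (ipxx_real hip) [RHS](ipxx_real hip); congr (_%:C%C).
by apply/eqP; rewrite -eqr_sqrt //; apply/eqP; exact: (proj2 isoV x).
Qed.

Lemma isometry_ip (x y : H) : ip (V x) (V y) = ip x y.
Proof.
have linV := proj1 isoV.
have sym u v : ip (V u) (V v) + ip (V v) (V u) = ip u v + ip v u.
  have := isometry_ipxx (u + v).
  rewrite linear_opD // !(ipDD hip) !isometry_ipxx.
  by move/addIr/addrI.
apply: (mulfI (_ : 2 != 0)); first by rewrite pnatr_eq0.
by rewrite !(ip_polarization hip) -linear_opZ // !sym.
Qed.

End Isometry.

Section Adjoint.
Variables (R : realType) (H : lmodType R[i]) (ip : H -> H -> R[i]).
Hypothesis hip : is_inner_product ip.

Lemma adjoint_uniq (T A A' : H -> H) :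
  is_adjoint ip T A -> is_adjoint ip T A' -> forall y, A y = A' y.
Proof.
by move=> adjA adjA' y; apply: (ipr_inj hip) => x; rewrite -adjA adjA'.
Qed.

Lemma adjoint_comp (S T A B : H -> H) :
  is_adjoint ip S A -> is_adjoint ip T B ->
  is_adjoint ip (fun x => S (T x)) (fun y => B (A y)).
Proof. by move=> adjA adjB x y; rewrite adjA adjB. Qed.

Lemma isometry_adjoint_factor (V T B : H -> H) :
  is_isometry ip V -> is_adjoint ip (fun x => V (T x)) B ->
  is_adjoint ip T (fun y => B (V y)).
Proof. by move=> isoV adjB x y; rewrite -adjB (isometry_ip hip). Qed.

Lemma isometry_adjointK (V A : H -> H) :
  is_isometry ip V -> is_adjoint ip V A -> forall w, A (V w) = w.
Proof.
move=> isoV adjA w; apply: (ipr_inj hip) => x.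
by rewrite -adjA (isometry_ip hip).
Qed.

(* [V1 A1] and [V2 A2] are both the orthogonal projection onto the common
   range, and an isometry preserves norms. *)
Lemma same_range_adjoint_norm (V1 V2 A1 A2 : H -> H) :
  is_isometry ip V1 -> is_isometry ip V2 ->
  (forall y, op_range V1 y <-> op_range V2 y) ->
  is_adjoint ip V1 A1 -> is_adjoint ip V2 A2 ->
  forall y, hnorm ip (A2 y) = hnorm ip (A1 y).
Proof.
move=> iso1 iso2 ran adj1 adj2 y.
have A2_proj : A2 y = A2 (V1 (A1 y)).
  apply: (ipr_inj hip) => x; rewrite -!adj2.
  have [u ->] : op_range V1 (V2 x) by apply/ran; exists x.
  by rewrite (isometry_ip hip iso1) adj1.
have [w V1A1y] : op_range V2 (V1 (A1 y)) by apply/ran; exists (A1 y).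
rewrite A2_proj V1A1y (isometry_adjointK iso2 adj2).
by rewrite -(proj2 iso2 w) -V1A1y (proj2 iso1).
Qed.

End Adjoint.

Section Iterates.
Variables (T : Type) (f g : T -> T).
Hypothesis fg_comm : forall y, f (g y) = g (f y).

Lemma iter_comm k y : iter k f (g y) = g (iter k f y).
Proof. by elim: k => //= k ->; rewrite fg_comm. Qed.

Lemma iter_comp_comm n y : iter n (fun z => f (g z)) y = iter n f (iter n g y).
Proof. by elim: n y => //= n IHn y; rewrite IHn iter_comm. Qed.

Lemma eq_norm_iter_comp_comm (S : Type) (N : T -> S) :
  (forall y, N (g y) = N (f y)) ->
  forall n y, N (iter n (fun z => f (g z)) y) = N (iter (n + n) f y).
Proof.
move=> Ng n y; rewrite iter_comp_comm.
have mixed k m : N (iter k f (iter m g y)) = N (iter (k + m) f y).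
  elim: m k => [|m IHm] k; first by rewrite addn0.
  by rewrite iterS iter_comm Ng -iterS IHm addSnnS.
exact: mixed.
Qed.

End Iterates.

Definition iter_vanishing (R : numDomainType) (T : Type)
    (N : T -> R) (h : T -> T) :=
  forall (x : T) (e : R), 0 < e ->
    exists n0 : nat, forall n : nat, (n0 <= n)%N -> N (iter n h x) < e.

Lemma iter_vanishing_double (R : numDomainType) (T : Type)
    (N : T -> R) (f h : T -> T) :
  (forall n x, N (iter n h x) = N (iter (n + n) f x)) ->
  iter_vanishing N h -> iter_vanishing N f.
Proof.
move=> N_h_f van_h x e e_gt0.
have [n1 van_x] := van_h x e e_gt0; have [n2 van_fx] := van_h (f x) e e_gt0.
exists (n1 + n2).*2 => n; rewrite -geq_half_double => le_n12.
rewrite -(odd_double_half n) -addnn; case: (odd n).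
- by rewrite add1n iterSr -N_h_f van_fx // (leq_trans (leq_addl _ _) le_n12).
- by rewrite add0n -N_h_f van_x // (leq_trans (leq_addr _ _) le_n12).
Qed.

Section CommutingIsometries.
Variables (R : realType) (H : lmodType R[i]) (ip : H -> H -> R[i]).
Hypothesis hip : is_inner_product ip.
Variables (V1 V2 : H -> H).
Hypotheses (iso1 : is_isometry ip V1) (iso2 : is_isometry ip V2).
Hypothesis comm : forall x, V1 (V2 x) = V2 (V1 x).
Hypothesis ran : forall y, op_range V1 y <-> op_range V2 y.

Lemma same_range_adjoint_vanishing (A1 A2 B : H -> H) :
  is_adjoint ip V1 A1 -> is_adjoint ip V2 A2 ->
  is_adjoint ip (fun x => V1 (V2 x)) B ->
  iter_vanishing (hnorm ip) B -> iter_vanishing (hnorm ip) A1.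
Proof.
move=> adj1 adj2 adjB.
have adjB' : is_adjoint ip (fun x => V2 (V1 x)) B by move=> x y; rewrite -comm.
have B_A2A1 := adjoint_uniq hip adjB (adjoint_comp adj1 adj2).
have B_A1A2 := adjoint_uniq hip adjB' (adjoint_comp adj2 adj1).
have A_comm y : A1 (A2 y) = A2 (A1 y) by rewrite -B_A2A1 B_A1A2.
apply: iter_vanishing_double => n x.
have A_norm := same_range_adjoint_norm hip iso1 iso2 ran adj1 adj2.
by rewrite -(eq_norm_iter_comp_comm A_comm A_norm) (eq_iter B_A1A2).
Qed.

End CommutingIsometries.

Theorem corollary5p5 (R : realType) (H : lmodType R[i]) (ip : H -> H -> R[i])
  (hH : is_hilbert ip) (V1 V2 : H -> H)
  (iso1 : is_isometry ip V1) (iso2 : is_isometry ip V2)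
  (comm : forall x : H, V1 (V2 x) = V2 (V1 x))
  (ran : forall y : H, op_range V1 y <-> op_range V2 y) :
  is_pure ip (fun x => V1 (V2 x)) -> is_pure ip V1 /\ is_pure ip V2.
Proof.
have [hip _] := hH.
move=> [B [adjB vanB]].
have adjB' : is_adjoint ip (fun x => V2 (V1 x)) B by move=> x y; rewrite -comm.
have adj1 := isometry_adjoint_factor hip iso2 adjB'.
have adj2 := isometry_adjoint_factor hip iso1 adjB.
split; [exists (fun y => B (V2 y)) | exists (fun y => B (V1 y))]; split=> //.
- exact: (same_range_adjoint_vanishing hip iso1 iso2 comm ran
           adj1 adj2 adjB vanB).
- exact: (same_range_adjoint_vanishing hip iso2 iso1 (fun x => esym (comm x))
           (fun y => iff_sym (ran y)) adj2 adj1 adjB' vanB).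
Qed.
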